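(* Let $G$ be a graph containing no cycle of length 6, let $x\in V(G)$, and let $A$ be a bipartite connected component of $G[N_2(x)]$ with vertex sets of bipartition $V_1$ and $V_2$ such that $\min(|V_1|,|V_2|)\ge 2$. Then $|N(x)\cap N(V(A))|=1$.
   Context: All graphs are finite, simple and undirected; ''containing no cycle of length 6'' means having no subgraph (not necessarily induced) isomorphic to $C_6$. $N_i(S)$ denotes the set of vertices at distance exactly $i$ from the vertex set $S$, $N(S)=N_1(S)$, $N(v)=N(\{v\})$, $N_2(v)=N_2(\{v\})$. *)

(* A simple graph is a symmetric irreflexive relation
   e : rel T on a finite type T. *)
From mathcomp Require Import all_boot.
Set Implicit Arguments.
Unset Strict Implicit.
Unset Printing Implicit Defensive.

Section Graph.
Variable T : finType.
Variable e : rel T.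

Definition no_C6 : Prop :=
  forall v0 v1 v2 v3 v4 v5 : T,
    uniq [:: v0; v1; v2; v3; v4; v5] ->
    ~~ [&& e v0 v1, e v1 v2, e v2 v3, e v3 v4, e v4 v5 & e v5 v0].

Definition NS (S : {set T}) : {set T} :=
  [set v | (v \notin S) && [exists u in S, e u v]].

Definition N1 (x : T) : {set T} := NS [set x].

Definition N2 (x : T) : {set T} :=
  [set v | [&& v != x, ~~ e x v & [exists u, e x u && e u v]]].

Definition induced (S : {set T}) : rel T :=
  [rel u v | [&& e u v, u \in S & v \in S]].

Definition is_component (S C : {set T}) : Prop :=
  exists2 u, u \in S & C = [set v in S | connect (induced S) u v].

Definition bipartition (C V1 V2 : {set T}) : Prop :=
  [/\ V1 :|: V2 = C, [disjoint V1 & V2],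
      {in V1 &, forall u v, ~~ e u v} & {in V2 &, forall u v, ~~ e u v}].

End Graph.

From mathcomp Require Import all_boot.

(* Every vertex of N2(x) has a neighbour in N(x).  If a and c lie in N2(x),
   a <> c, and a - p - c is a path inside N2(x), then a neighbour s of a and a
   neighbour r of c in N(x) must coincide, for otherwise x s a p c r is a
   6-cycle.  Since both sides of A have two vertices, every vertex of A starts
   such a path inside A, so each vertex of A has exactly one neighbour in N(x).
   Another 6-cycle through two N(x)-vertices shows that adjacent vertices of A
   have the same neighbour in N(x), and connectivity of A propagates it to all
   of A. *)

Set Implicit Arguments.
Unset Strict Implicit.
Unset Printing Implicit Defensive.

Section Component.
Variables (T : finType) (e : rel T).
Hypothesis e_sym : symmetric e.
Variables (S C : {set T}).
Hypothesis hC : is_component e S C.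

Lemma induced_sym : symmetric (induced e S).
Proof. by move=> u v; rewrite /induced /= e_sym (andbC (u \in S)). Qed.

Lemma component_nonempty : exists u, u \in C.
Proof. by case: hC => u uS ->; exists u; rewrite inE uS connect0. Qed.

Lemma component_sub : C \subset S.
Proof. by case: hC => u _ ->; apply/subsetP => v /setIdP[]. Qed.

Lemma component_connect u v : u \in C -> v \in C -> connect (induced e S) u v.
Proof.
case: hC => w _ -> /setIdP[_ wu] /setIdP[_ wv].
by apply: connect_trans wv; rewrite (sym_connect_sym induced_sym).
Qed.

Lemma component_closed u v : u \in C -> induced e S u v -> v \in C.
Proof.
case: hC => w _ -> /setIdP[_ wu] uv; move: (uv) => /and3P[_ _ vS].
by rewrite inE vS (connect_trans wu (connect1 uv)).
Qed.

(* A shortest path from [a] to a non-neighbour [a'] has at least two edges. *)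
Lemma component_path2 a a' : a \in C -> a' \in C -> a' != a -> ~~ e a a' ->
  exists p c, [/\ p \in C, c \in C, e a p, e p c & c != a].
Proof.
move=> aC a'C; case/connectP: (component_connect aC a'C) => q + ->.
case/shortenP=> -[|p [|c r]] //= q_path q_uniq _.
- by rewrite eqxx.
- by rewrite andbT in q_path; case/and3P: q_path => ->.
move=> _ _; case/and3P: q_path => ap pc _.
move: (ap) (pc) => /and3P[eap _ _] /and3P[epc _ _].
move: q_uniq; rewrite !inE !negb_or => /andP[/andP[_ /andP[ac _]] _].
have pC := component_closed aC ap.
by exists p, c; split; rewrite // ?(component_closed pC pc) // eq_sym.
Qed.

End Component.

Section Bipartition.
Variables (T : finType) (e : rel T) (C V1 V2 : {set T}).
Hypothesis hbip : bipartition e C V1 V2.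

Lemma bipartition_adj u v : u \in C -> v \in C -> e u v -> (u \in V1) != (v \in V1).
Proof.
case: hbip => <- _ V1e V2e; rewrite !inE => uV vV euv.
case: (boolP (u \in V1)) => u1; case: (boolP (v \in V1)) => v1 //=.
  by move: (V1e u v u1 v1); rewrite euv.
have u2 : u \in V2 by rewrite (negbTE u1) in uV.
have v2 : v \in V2 by rewrite (negbTE v1) in vV.
by move: (V2e u v u2 v2); rewrite euv.
Qed.

Lemma bipartition_triangle_free a b c : a \in C -> b \in C -> c \in C ->
  e a b -> e b c -> ~~ e c a.
Proof.
move=> aC bC cC eab ebc; apply/negP => eca.
move: (bipartition_adj aC bC eab) (bipartition_adj bC cC ebc).
move: (bipartition_adj cC aC eca).
by case: (a \in V1); case: (b \in V1); case: (c \in V1).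
Qed.

Lemma independent_mate (W : {set T}) a : {in W &, forall u v, ~~ e u v} ->
  2 <= #|W| -> a \in W -> exists2 a', a' \in W & (a' != a) && ~~ e a a'.
Proof.
move=> Wind W2 aW; have : 0 < #|W :\ a| by rewrite (cardsD1 a W) aW in W2.
case/card_gt0P => a' /setD1P[a'a a'W].
by exists a'; rewrite // a'a Wind.
Qed.

Lemma bipartition_mate a : 2 <= #|V1| -> 2 <= #|V2| -> a \in C ->
  exists2 a', a' \in C & (a' != a) && ~~ e a a'.
Proof.
case: hbip => <- _ V1e V2e V1_2 V2_2; case/setUP => aV.
  by have [a' a'V] := independent_mate V1e V1_2 aV; exists a'; rewrite ?inE ?a'V.
by have [a' a'V] := independent_mate V2e V2_2 aV; exists a'; rewrite ?inE ?a'V ?orbT.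
Qed.

End Bipartition.

Section NoC6.
Variables (T : finType) (e : rel T).
Hypotheses (e_sym : symmetric e) (e_irr : irreflexive e) (noC6 : no_C6 e).
Variable x : T.

Lemma adj_neq u v : e u v -> u != v.
Proof. by apply: contraTneq => ->; rewrite e_irr. Qed.

Lemma mem_N1 v : (v \in N1 e x) = e x v.
Proof.
rewrite !inE; apply/andP/idP => [[_ /exists_inP[u /set1P-> //]] | xv].
by split; [rewrite eq_sym (adj_neq xv) | apply/exists_inP; exists x; rewrite ?inE].
Qed.

Lemma N2_neq v : v \in N2 e x -> v != x.
Proof. by rewrite inE => /and3P[]. Qed.

Lemma N2_nadj v : v \in N2 e x -> ~~ e x v.
Proof. by rewrite inE => /and3P[]. Qed.

Lemma N2_attached v : v \in N2 e x -> exists2 r, e x r & e r v.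
Proof. by rewrite inE => /and3P[_ _ /existsP[r /andP[]]]; exists r. Qed.

Lemma hexagon_free v0 v1 v2 v3 v4 v5 : uniq [:: v0; v1; v2; v3; v4; v5] ->
  e v0 v1 -> e v1 v2 -> e v2 v3 -> e v3 v4 -> e v4 v5 -> e v5 v0 -> False.
Proof.
by move=> /noC6 + e01 e12 e23 e34 e45 e50; rewrite e01 e12 e23 e34 e45 e50.
Qed.

Ltac distinct_vertices :=
  rewrite /= !inE !negb_or; repeat (apply/andP; split) => //;
  apply/eqP => E; subst;
  match goal with
  | H : is_true (?v != ?v) |- _ => by rewrite eqxx in H
  | H : is_true (e ?v ?v) |- _ => by rewrite e_irr in H
  | H : is_true (e ?u ?v), H' : is_true (~~ e ?u ?v) |- _ => by rewrite H in H'
  end.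

(* In the following, a vertex s of N(x) is attached to v when e s v. *)
Lemma attach_two_apart s r a p c :
  e x s -> e x r -> a \in N2 e x -> p \in N2 e x -> c \in N2 e x ->
  e s a -> e a p -> e p c -> e r c -> c != a -> s = r.
Proof.
move=> xs xr aN pN cN sa ap pc rc ca; apply/eqP/negPn/negP => sr.
have [[xa xp] xc] := (N2_neq aN, N2_neq pN, N2_neq cN).
have [[nxa nxp] nxc] := (N2_nadj aN, N2_nadj pN, N2_nadj cN).
apply: (hexagon_free (v5 := r) _ xs sa ap pc); rewrite 1?e_sym //.
distinct_vertices.
Qed.

Lemma attach_hexagon s t w1 w2 w3 w4 : e x s -> e x t ->
  w1 \in N2 e x -> w2 \in N2 e x -> w3 \in N2 e x -> w4 \in N2 e x ->
  e s w1 -> e w2 w1 -> e t w2 -> e t w3 -> e w4 w3 -> e s w4 ->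
  w1 != w3 -> w1 != w4 -> w2 != w3 -> w2 != w4 -> s = t.
Proof.
move=> xs xt w1N w2N w3N w4N e1 e2 e3 e4 e5 e6 n13 n14 n23 n24.
apply/eqP/negPn/negP => st.
have [[[nx1 nx2] nx3] nx4] := (N2_nadj w1N, N2_nadj w2N, N2_nadj w3N, N2_nadj w4N).
apply: (hexagon_free (v2 := w2) (v5 := w4) _ e1 _ _ e4); rewrite 1?e_sym //.
distinct_vertices.
Qed.

Variables (A V1 V2 : {set T}).
Hypotheses (hA : is_component e (N2 e x) A) (hbip : bipartition e A V1 V2).
Hypotheses (V1_2 : 2 <= #|V1|) (V2_2 : 2 <= #|V2|).

Let A_N2 a : a \in A -> a \in N2 e x := subsetP (component_sub hA) a.

Lemma path2_from a : a \in A ->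
  exists p c, [/\ p \in A, c \in A, e a p, e p c & c != a].
Proof.
move=> aA; have [a' a'A /andP[a'a naa']] := bipartition_mate hbip V1_2 V2_2 aA.
exact: (component_path2 e_sym hA aA a'A a'a naa').
Qed.

Lemma attach_unique a s t : a \in A -> e x s -> e s a -> e x t -> e t a -> s = t.
Proof.
move=> aA xs sa xt ta; have [p [c [pA cA ap pc ca]]] := path2_from aA.
have [r xr rc] := N2_attached (A_N2 cA).
have [[aN pN] cN] := (A_N2 aA, A_N2 pA, A_N2 cA).
by rewrite (attach_two_apart xs xr aN pN cN sa ap pc rc ca)
           (attach_two_apart xt xr aN pN cN ta ap pc rc ca).
Qed.

Lemma attach_branch a b p c s t : a \in A -> b \in A -> p \in A -> c \in A ->
  e a b -> e a p -> e p c -> p != b -> c != a ->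
  e x s -> e s a -> e x t -> e t b -> s = t.
Proof.
move=> aA bA pA cA ab ap pc pb ca xs sa xt tb.
have [[[aN bN] pN] cN] := (A_N2 aA, A_N2 bA, A_N2 pA, A_N2 cA).
have [r xr rc] := N2_attached cN; have [r' xr' r'p] := N2_attached pN.
have sr : s = r := attach_two_apart xs xr aN pN cN sa ap pc rc ca; subst r.
have tr' : t = r'.
  by apply: attach_two_apart xt xr' bN aN pN tb _ ap r'p pb; rewrite e_sym.
subst r'.
apply: (attach_hexagon xs xt cN pN bN aN rc pc r'p tb ab sa _ ca pb _).
  apply: contraNneq (bipartition_triangle_free hbip aA pA cA ap pc) => ->.
  by rewrite e_sym.
by rewrite eq_sym adj_neq.
Qed.

Lemma attach_edge a b s t : a \in A -> b \in A -> e a b ->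
  e x s -> e s a -> e x t -> e t b -> s = t.
Proof.
move=> aA bA ab xs sa xt tb; have [p [c [pA cA ap pc ca]]] := path2_from aA.
case: (eqVneq p b) => [? | pb]; last first.
  exact: (attach_branch aA bA pA cA ab ap pc pb ca xs sa xt tb).
subst p; have [q [d [qA dA bq qd db]]] := path2_from bA.
case: (eqVneq q a) => [? | qa]; last first.
  by symmetry; apply: attach_branch bA aA qA dA _ bq qd qa db xt tb xs sa; rewrite e_sym.
(* Now c - b - a - d is a path, and s c b t d a is a 6-cycle. *)
subst q; have [[[aN bN] cN] dN] := (A_N2 aA, A_N2 bA, A_N2 cA, A_N2 dA).
have [r xr rc] := N2_attached cN; have [r' xr' r'd] := N2_attached dN.
have sr : s = r := attach_two_apart xs xr aN bN cN sa ab pc rc ca; subst r.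
have tr' : t = r' := attach_two_apart xt xr' bN aN dN tb bq qd r'd db; subst r'.
apply: (attach_hexagon xs xt cN bN dN aN rc pc tb r'd qd sa _ ca _ (adj_neq bq)).
- apply: contraNneq (bipartition_triangle_free hbip aA bA cA ab pc) => ->.
  by rewrite e_sym.
- by rewrite eq_sym.
Qed.

Lemma attach_component a b s t : a \in A -> b \in A ->
  e x s -> e s a -> e x t -> e t b -> s = t.
Proof.
move=> aA bA; case/connectP: (component_connect e_sym hA aA bA) => q + ->.
elim: q a s aA {bA} => [|v q IH] a s aA /=; first by move=> _; apply: attach_unique.
case/andP=> av q_path xs sa xt tv; have vA := component_closed hA aA av.
have [r xr rv] := N2_attached (A_N2 vA).
rewrite (attach_edge aA vA _ xs sa xr rv); last by case/and3P: av.
exact: IH vA q_path xr rv xt tv.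
Qed.

Lemma mem_attachments s :
  (s \in N1 e x :&: NS e A) = e x s && [exists a in A, e s a].
Proof.
rewrite inE mem_N1 inE; case: (boolP (e x s)) => //= xs.
have /negbTE-> : s \notin A by apply: contraTN xs => /A_N2/N2_nadj.
by apply/exists_inP/exists_inP => -[a aA]; exists a; rewrite // e_sym.
Qed.

End NoC6.

Theorem lemma2p5 (T : finType) (e : rel T)
  (e_sym : symmetric e) (e_irr : irreflexive e)
  (noC6 : no_C6 e) (x : T) (A V1 V2 : {set T})
  (hA : is_component e (N2 e x) A)
  (hbip : bipartition e A V1 V2)
  (h1 : 2 <= #|V1|) (h2 : 2 <= #|V2|) :
  #|N1 e x :&: NS e A| = 1.
Proof.
apply/eqP; rewrite eqn_leq; apply/andP; split.
  apply/card_le1_eqP => s t; rewrite !(mem_attachments e_sym e_irr hA).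
  case/andP=> xs /exists_inP[a aA sa] /andP[xt /exists_inP[b bA tb]].
  exact: (attach_component e_sym e_irr noC6 hA hbip h1 h2 bA aA xt tb xs sa).
have [u uA] := component_nonempty hA.
have [r xr ru] := N2_attached (subsetP (component_sub hA) u uA).
apply/card_gt0P; exists r; rewrite (mem_attachments e_sym e_irr hA) xr.
by apply/exists_inP; exists u.
Qed.
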